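(* Let $F(u,v)=F(u,v;t)=\sum_{p,q\ge1}f_{p,q}(t)u^pv^q$, where $f_{p,q}(t)=\sum_{n\ge1}t^n\,|\{e\in\mathbf{I}_n(201,210): e\text{ has parameters }(p,q)\}|$. Then $$F(u,v)=tuv+t\left(\frac{uF(u,v)-vF(v,v)}{1-v/u}+u^2v\left(\left.\frac{\partial F(u,v)}{\partial v}\right|_{v=1}-F(u,1)\right)\right).$$ Equivalently, writing $F(u,v)=\sum_{n\ge1}f_n(u,v)t^n$, we have $f_1(u,v)=uv$ and for $n\ge2$ $$f_n(u,v)=\frac{uf_{n-1}(u,v)-vf_{n-1}(v,v)}{1-v/u}+u^2v\left(\left.\frac{\partial f_{n-1}(u,v)}{\partial v}\right|_{v=1}-f_{n-1}(u,1)\right).$$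
   Context: $\mathbf{I}_n=\{(e_1,\dots,e_n)\in\mathbb{N}^n:0\le e_i<i\}$. $\mathbf{I}_n(201,210)$ is the set of $e\in\mathbf{I}_n$ with no indices $i<j<k$ such that $e_j<e_k<e_i$ and no indices $i<j<k$ such that $e_i>e_j>e_k$. The parameters of $e\in\mathbf{I}_n(201,210)$ are $(p,q)$ where $p=|\{k>e_n:(e_1,\dots,e_n,k)\in\mathbf{I}_{n+1}(201,210)\}|$ and $q=|\{k\le e_n:(e_1,\dots,e_n,k)\in\mathbf{I}_{n+1}(201,210)\}|$. *)

From mathcomp Require Import all_boot all_order all_algebra.
Set Implicit Arguments. Unset Strict Implicit. Unset Printing Implicit Defensive.
Import GRing.Theory Num.Theory.

(* Sequences are 0-indexed: entry e_{i+1} of the paper is [nth 0 e i]. *)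

Definition is_inv (e : seq nat) : bool :=
  all (fun i => nth 0 e i < i.+1) (iota 0 (size e)).

Definition contains201 (e : seq nat) : bool :=
  let I := iota 0 (size e) in
  has (fun i => has (fun j => has (fun k =>
    [&& i < j, j < k, nth 0 e j < nth 0 e k & nth 0 e k < nth 0 e i]) I) I) I.

Definition contains210 (e : seq nat) : bool :=
  let I := iota 0 (size e) in
  has (fun i => has (fun j => has (fun k =>
    [&& i < j, j < k, nth 0 e j < nth 0 e i & nth 0 e k < nth 0 e j]) I) I) I.

Definition inI201_210 (e : seq nat) : bool :=
  [&& is_inv e, ~~ contains201 e & ~~ contains210 e].

(* parameters (p,q); an extension (e,k) lies in I_{n+1} only if k <= n,
   so k ranges over 0..n. *)
Definition param_p (e : seq nat) : nat :=
  count (fun k => (last 0 e < k) && inI201_210 (rcons e k)) (iota 0 (size e).+1).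
Definition param_q (e : seq nat) : nat :=
  count (fun k => (k <= last 0 e) && inI201_210 (rcons e k)) (iota 0 (size e).+1).

(* f_n(u, v) as a polynomial in v, for fixed u:
   sum over e in I_n(201,210) with parameters (p,q), p,q >= 1, of u^p v^q.
   Every e in I_n has all entries < n, so I_n embeds in n.-tuple 'I_n. *)
Definition fpoly (R : numFieldType) (n : nat) (u : R) : {poly R} :=
  \sum_(t : n.-tuple 'I_n | [&& inI201_210 (map val t),
                               0 < param_p (map val t) & 0 < param_q (map val t)])
     (u ^+ param_p (map val t) *: 'X ^+ param_q (map val t)).

Definition fn (R : numFieldType) (n : nat) (u v : R) : R := (fpoly n u).[v].

(* Let e be in I_n(201,210), with last entry a and maximal entry m.  Its
   admissible next entries are all of [m, n] together with some values below
   m, and a is the only one below m when a < m.  Appending k >= m only adds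
   n+1 to the admissible set, while appending k < m leaves {k} u [m, n+1].
   Hence if e has parameters (p, q), its children have parameters
   (p+1-j, q+j) for j = 0..p together with q-1 copies of (p+2, 1); summing
   u^p' v^q' over them is a geometric sum which equals the right-hand side of
   the recurrence evaluated at the monomial u^p v^q. *)

From mathcomp Require Import all_boot all_order all_algebra.
From mathcomp Require Import zify ring.
Import GRing.Theory Num.Theory.
Set Implicit Arguments. Unset Strict Implicit.

(* For a descent e_j < e_i, avoiding both 201 and 210 at positions i < j < k
   says exactly that e_k is e_j or at least e_i. *)
Lemma inI201_210P e :
  inI201_210 e <->
  (forall i, i < size e -> nth 0 e i <= i) /\
  (forall i j k, i < j -> j < k -> k < size e -> nth 0 e j < nth 0 e i ->
     nth 0 e k = nth 0 e j \/ nth 0 e i <= nth 0 e k).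
Proof.
have memI i : (i \in iota 0 (size e)) = (i < size e) by rewrite mem_iota.
rewrite /inI201_210 /is_inv /contains201 /contains210; split.
- case/and3P=> /allP inv /hasPn no201 /hasPn no210; split.
  + by move=> i lt_i; apply: inv; rewrite memI.
  + move=> i j k lt_ij lt_jk lt_k desc.
    have lt_j : j < size e by lia.
    have lt_i : i < size e by lia.
    move: (no201 i) (no210 i); rewrite memI lt_i.
    move=> /(_ isT)/hasPn/(_ j) + /(_ isT)/hasPn/(_ j).
    rewrite memI lt_j => /(_ isT)/hasPn/(_ k) + /(_ isT)/hasPn/(_ k).
    rewrite memI lt_k => /(_ isT) + /(_ isT).
    rewrite lt_ij lt_jk desc /=; lia.
- case=> inv avoid; apply/and3P; split.
  + by apply/allP => i; rewrite memI; apply: inv.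
  + apply/hasPn => i _; apply/hasPn => j _; apply/hasPn => k; rewrite memI => lt_k.
    apply/negP => /and4P[lt_ij lt_jk lt_jk' lt_ki].
    have := avoid i j k lt_ij lt_jk lt_k; lia.
  + apply/hasPn => i _; apply/hasPn => j _; apply/hasPn => k; rewrite memI => lt_k.
    apply/negP => /and4P[lt_ij lt_jk lt_ji lt_kj].
    have := avoid i j k lt_ij lt_jk lt_k; lia.
Qed.

Lemma nth_rcons0 e x i :
  nth 0 (rcons e x) i = if i < size e then nth 0 e i else if i == size e then x else 0.
Proof. by rewrite nth_rcons; case: ltngtP. Qed.

Definition extendable (e : seq nat) (x : nat) : Prop :=
  x <= size e /\
  forall i j, i < j -> j < size e -> nth 0 e j < nth 0 e i ->
    x = nth 0 e j \/ nth 0 e i <= x.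

Lemma inI201_210_rcons e x :
  inI201_210 (rcons e x) <-> inI201_210 e /\ extendable e x.
Proof.
rewrite !inI201_210P /extendable size_rcons; split.
- case=> inv avoid; split; [split|split].
  + by move=> i lt_i; have := inv i (ltnW lt_i); rewrite nth_rcons0 lt_i.
  + move=> i j k lt_ij lt_jk lt_k; have := avoid i j k lt_ij lt_jk (ltnW lt_k).
    by rewrite !nth_rcons0 lt_k !ifT //; lia.
  + by have := inv (size e) (ltnSn _); rewrite nth_rcons0 ltnn eqxx.
  + move=> i j lt_ij lt_j; have := avoid i j (size e) lt_ij lt_j (ltnSn _).
    by rewrite !nth_rcons0 lt_j ltnn eqxx ifT //; lia.
- case=> -[inv avoid] [le_x tail]; split.
  + move=> i; rewrite ltnS leq_eqVlt nth_rcons0 => /orP[/eqP->|lt_i].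
      by rewrite ltnn eqxx.
    by rewrite lt_i; apply: inv.
  + move=> i j k lt_ij lt_jk; rewrite ltnS leq_eqVlt !nth_rcons0 => /orP[/eqP Ek|lt_k].
      subst k; have lt_j : j < size e by lia.
      by rewrite ltnn eqxx lt_j (ltn_trans lt_ij lt_j); apply: tail.
    have lt_j : j < size e by lia.
    by rewrite lt_k lt_j (ltn_trans lt_ij lt_j); apply: avoid.
Qed.

Lemma extendable_rcons e k x :
  extendable (rcons e k) x <->
  [/\ x <= (size e).+1,
      forall i j, i < j -> j < size e -> nth 0 e j < nth 0 e i ->
        x = nth 0 e j \/ nth 0 e i <= x
    & forall i, i < size e -> k < nth 0 e i -> x = k \/ nth 0 e i <= x].
Proof.
rewrite /extendable size_rcons; split.
- case=> le_x tail; split => // [i j lt_ij lt_j|i lt_i].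
    by have := tail i j lt_ij (ltnW lt_j); rewrite !nth_rcons0 lt_j ifT //; lia.
  by have := tail i (size e) lt_i (ltnSn _); rewrite !nth_rcons0 lt_i ltnn eqxx.
- case=> le_x tail tail_k; split => // i j lt_ij.
  rewrite ltnS leq_eqVlt !nth_rcons0 => /orP[/eqP Ej|lt_j].
    by subst j; rewrite ltnn eqxx lt_ij; apply: tail_k.
  by rewrite lt_j (ltn_trans lt_ij lt_j); apply: tail.
Qed.

Definition max_entry (e : seq nat) : nat := \max_(i < size e) nth 0 e i.

Lemma nth_le_max_entry e i : i < size e -> nth 0 e i <= max_entry e.
Proof. by move=> lt_i; apply: (leq_bigmax (Ordinal lt_i)). Qed.

Lemma max_entry_attained e : 0 < size e ->
  exists2 i, i < size e & nth 0 e i = max_entry e.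
Proof.
move=> e_gt0; have card_gt0 : 0 < #|'I_(size e)| by rewrite card_ord.
have [i Ei] := eq_bigmax (fun i : 'I_(size e) => nth 0 e i) card_gt0.
by exists i; rewrite // /max_entry Ei.
Qed.

Definition admissible (e : seq nat) (x : nat) : bool := inI201_210 (rcons e x).

Definition admissibles (e : seq nat) : seq nat :=
  [seq x <- iota 0 (size e).+1 | admissible e x].

Lemma admissible_le_size e x : admissible e x -> x <= size e.
Proof. by case/inI201_210_rcons=> _ []. Qed.

Lemma admissible_rcons e k x :
  admissible e k -> (admissible (rcons e k) x <-> extendable (rcons e k) x).
Proof. by move=> adm_k; rewrite /admissible inI201_210_rcons; split=> [[]|]. Qed.

Lemma count_iota_leq s d t : count (fun x => x <= t) (iota s d) = minn d (t.+1 - s).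
Proof.
elim: d s => [|d IHd] s /=; first by rewrite min0n.
by rewrite IHd; case: (leqP s t) => le_st /=; lia.
Qed.

Lemma count_iota_gt s d t : count (fun x => t < x) (iota s d) = d - (t.+1 - s).
Proof.
have := count_predC (fun x => x <= t) (iota s d).
rewrite size_iota count_iota_leq (@eq_count _ _ (fun x => t < x)); first lia.
by move=> x /=; rewrite ltnNge.
Qed.

Lemma param_pE e : param_p e = count (fun x => last 0 e < x) (admissibles e).
Proof. by rewrite count_filter. Qed.

Lemma param_qE e : param_q e = count (fun x => x <= last 0 e) (admissibles e).
Proof. by rewrite count_filter. Qed.

Definition admissibles_below_max (e : seq nat) : seq nat :=
  [seq x <- iota 0 (max_entry e) | admissible e x].

Lemma admissibles_below_max_lt e x : x \in admissibles_below_max e -> x < max_entry e.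
Proof. by rewrite mem_filter mem_iota => /and3P[]. Qed.

Section Admissibles.

Variable e : seq nat.
Hypothesis e_in : inI201_210 e.
Hypothesis e_gt0 : 0 < size e.

Local Notation n := (size e).
Local Notation a := (last 0 e).
Local Notation m := (max_entry e).
Local Notation low := (admissibles_below_max e).

Lemma last_nth_pred : a = nth 0 e n.-1.
Proof. by case: e e_gt0 => // y s _; rewrite (last_nth 0). Qed.

Lemma max_entry_lt_size : m < n.
Proof.
have [i lt_i <-] := max_entry_attained e_gt0.
by have [inv _] := proj1 (inI201_210P e) e_in; apply: leq_ltn_trans (inv i lt_i) lt_i.
Qed.

Lemma last_le_max_entry : a <= m.
Proof. by rewrite last_nth_pred nth_le_max_entry // prednK. Qed.

Lemma admissibleE x : admissible e x <-> extendable e x.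
Proof. by rewrite /admissible inI201_210_rcons; split=> [[]|]. Qed.

Lemma admissible_ge_max x : m <= x <= n -> admissible e x.
Proof.
move=> /andP[ge_x le_x]; apply/admissibleE; split=> // i j lt_ij lt_j _.
by right; apply: leq_trans ge_x; apply: nth_le_max_entry; apply: ltn_trans lt_j.
Qed.

Lemma admissible_last : admissible e a.
Proof.
apply/admissibleE; have [inv avoid] := proj1 (inI201_210P e) e_in.
rewrite last_nth_pred; split; first by have := inv n.-1; lia.
move=> i j lt_ij lt_j; case: (ltngtP j n.-1) => [lt_j1|gt_j1|->]; last by left.
- by apply: avoid; lia.
- lia.
Qed.

Lemma admissible_lt_max x : a < m -> admissible e x -> x < m -> x = a.
Proof.
move=> lt_am /admissibleE[_ tail] lt_xm.
have [i lt_i Ei] := max_entry_attained e_gt0.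
have lt_in : i < n.-1.
  rewrite ltn_neqAle -ltnS (ltn_predK e_gt0) lt_i andbT.
  by apply: contraTneq lt_am => Ei'; rewrite last_nth_pred -Ei' Ei ltnn.
have lt_pred : n.-1 < n by rewrite ltn_predL.
have := tail i n.-1 lt_in lt_pred; rewrite -last_nth_pred Ei; lia.
Qed.

Lemma admissible_rcons_ge_max k x : admissible e k -> m <= k ->
  admissible (rcons e k) x = admissible e x || (x == n.+1).
Proof.
move=> adm_k le_mk; have le_kn := admissible_le_size adm_k.
have le_max i : i < n -> nth 0 e i <= m by apply: nth_le_max_entry.
apply/idP/idP => [|adm_x].
- case/(admissible_rcons _ adm_k)/extendable_rcons => le_x tail _.
  have [lt_x|->] : x < n.+1 \/ x = n.+1 by lia.
    by apply/orP; left; apply/admissibleE; split.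
  by rewrite eqxx orbT.
- apply/(admissible_rcons _ adm_k)/extendable_rcons.
  case/orP: adm_x => [/admissibleE[le_x tail]|/eqP->].
    split=> [|//|i lt_i]; first exact: leqW.
    by have := le_max i lt_i; lia.
  split=> // [i j lt_ij lt_j _|i lt_i]; right; have := le_max i; lia.
Qed.

Lemma admissible_rcons_lt_max k x : admissible e k -> k < m ->
  admissible (rcons e k) x = (x == k) || (m <= x <= n.+1).
Proof.
move=> adm_k lt_km; have le_max i : i < n -> nth 0 e i <= m by apply: nth_le_max_entry.
apply/idP/idP => [|adm_x].
- case/(admissible_rcons _ adm_k)/extendable_rcons => le_x _ tail_k.
  have [i lt_i Ei] := max_entry_attained e_gt0.
  have := tail_k i lt_i; rewrite Ei; lia.
- apply/(admissible_rcons _ adm_k)/extendable_rcons.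
  case/orP: adm_x => [/eqP->|/andP[ge_x le_x]].
    have /admissibleE[le_k tail] := adm_k.
    by split=> [|//|]; [exact: leqW | left].
  split=> // [i j lt_ij lt_j _|i lt_i _]; right; have := le_max i; lia.
Qed.

Lemma admissiblesE : admissibles e = low ++ iota m (n.+1 - m).
Proof.
have le_mn : m <= n.+1 by have := max_entry_lt_size; lia.
rewrite /admissibles -{1}(subnKC le_mn) iotaD filter_cat add0n; congr (_ ++ _).
apply/all_filterP/allP => x; rewrite mem_iota => range_x.
by apply: admissible_ge_max => //; lia.
Qed.

Lemma admissibles_below_max_lt_last : a < m -> low = [:: a].
Proof.
move=> lt_am; rewrite /admissibles_below_max.
rewrite (@eq_in_filter _ _ (pred1 a)) ?filter_pred1_uniq ?iota_uniq ?mem_iota //.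
move=> x; rewrite mem_iota => /andP[_ lt_xm] /=; apply/idP/eqP => [adm_x|->].
  exact: admissible_lt_max.
exact: admissible_last.
Qed.

Lemma admissibles_rcons_ge_max k : admissible e k -> m <= k ->
  admissibles (rcons e k) = rcons (admissibles e) n.+1.
Proof.
move=> adm_k le_mk; rewrite /admissibles size_rcons -addn1 iotaD filter_cat add0n.
have -> : [seq x <- iota n.+1 1 | admissible (rcons e k) x] = [:: n.+1].
  by rewrite /= (admissible_rcons_ge_max _ adm_k le_mk) eqxx orbT.
rewrite cats1; congr (rcons _ _).
apply: eq_in_filter => x; rewrite mem_iota => /andP[_ lt_x].
by rewrite (admissible_rcons_ge_max _ adm_k le_mk) (ltn_eqF lt_x) orbF.
Qed.

Lemma admissibles_rcons_lt_max k : admissible e k -> k < m ->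
  admissibles (rcons e k) = k :: iota m (n.+2 - m).
Proof.
move=> adm_k lt_km; have le_mn : m <= n.+2 by have := max_entry_lt_size; lia.
rewrite /admissibles size_rcons -{1}(subnKC le_mn) iotaD filter_cat add0n.
rewrite (@eq_in_filter _ _ (pred1 k) (iota 0 m)); last first.
  move=> x; rewrite mem_iota => /andP[_ lt_x] /=.
  by rewrite (admissible_rcons_lt_max _ adm_k lt_km) leqNgt lt_x orbF.
rewrite (@filter_pred1_uniq _ (iota 0 m)) ?iota_uniq ?mem_iota //=; congr cons.
apply/all_filterP/allP => x; rewrite mem_iota => range_x.
by rewrite (admissible_rcons_lt_max _ adm_k lt_km); apply/orP; right; lia.
Qed.

Lemma count_below_max_gt t : m <= t -> count (fun x => t < x) low = 0.
Proof.
move=> le_mt; apply/eqP; rewrite -leqn0 leqNgt -has_count; apply/hasPn => x.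
by move/admissibles_below_max_lt; lia.
Qed.

Lemma count_below_max_leq t : m <= t -> count (fun x => x <= t) low = size low.
Proof.
move=> le_mt; apply/eqP; rewrite -all_count; apply/allP => x.
by move/admissibles_below_max_lt; lia.
Qed.

Lemma params_rcons_lt_max k : admissible e k -> k < m ->
  param_p (rcons e k) = n.+2 - m /\ param_q (rcons e k) = 1.
Proof.
move=> adm_k lt_km; rewrite param_pE param_qE last_rcons admissibles_rcons_lt_max //=.
by rewrite ltnn leqnn count_iota_gt count_iota_leq; lia.
Qed.

Lemma params_rcons_ge_max k : admissible e k -> m <= k ->
  param_p (rcons e k) = n.+1 - k /\ param_q (rcons e k) = size low + (k.+1 - m).
Proof.
move=> adm_k le_mk; have le_kn := admissible_le_size adm_k.
rewrite param_pE param_qE last_rcons admissibles_rcons_ge_max // admissiblesE //.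
rewrite -cats1 !count_cat count_below_max_gt // count_below_max_leq //.
by rewrite count_iota_gt count_iota_leq /=; lia.
Qed.

Lemma params_lt_max : a < m -> param_p e = n.+1 - m /\ param_q e = 1.
Proof.
move=> lt_am; rewrite param_pE param_qE admissiblesE admissibles_below_max_lt_last //=.
by rewrite ltnn leqnn count_iota_gt count_iota_leq; lia.
Qed.

Lemma params_eq_max : a = m -> param_p e = n - m /\ param_q e = (size low).+1.
Proof.
move=> eq_am; have lt_mn := max_entry_lt_size.
rewrite param_pE param_qE admissiblesE !count_cat eq_am.
rewrite count_below_max_gt // count_below_max_leq // count_iota_gt count_iota_leq; lia.
Qed.

End Admissibles.

Local Open Scope ring_scope.

Lemma sum_iota_ord (V : nmodType) s d (F : nat -> V) :
  \sum_(k <- iota s d) F k = \sum_(j < d) F (s + j)%N.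
Proof.
rewrite -[s]addn0 iotaDl big_map.
have -> : iota 0 d = index_iota 0 d by rewrite /index_iota subn0.
by rewrite big_mkord; apply: eq_bigr => j _; rewrite addn0.
Qed.

Section ChildrenWeight.

Variables (R : numFieldType) (u v : R).

Definition weight (s : seq nat) : R := u ^+ param_p s * v ^+ param_q s.

Variable e : seq nat.
Hypothesis e_in : inI201_210 e.
Hypothesis e_gt0 : (0 < size e)%N.

Local Notation n := (size e).
Local Notation m := (max_entry e).
Local Notation low := (admissibles_below_max e).

Lemma children_weight_below_max :
  \sum_(k <- admissibles e) weight (rcons e k) =
    (u ^+ (n.+2 - m) * v) *+ size low +
    \sum_(j < n.+1 - m) u ^+ (n.+1 - m - j) * v ^+ (size low + j.+1).
Proof.
rewrite admissiblesE // big_cat /=; congr (_ + _).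
  rewrite big_seq (eq_bigr (fun _ => u ^+ (n.+2 - m) * v)).
    by rewrite -big_seq big_const_seq count_predT iter_addr_0.
  move=> k; rewrite mem_filter mem_iota => /and3P[adm_k _ lt_km].
  have [p_k q_k] := params_rcons_lt_max e_in e_gt0 adm_k lt_km.
  by rewrite /weight p_k q_k expr1.
rewrite sum_iota_ord; apply: eq_bigr => -[j lt_j] _ /=.
have adm_k : admissible e (m + j) by apply: admissible_ge_max => //; lia.
rewrite /weight; have [-> ->] := params_rcons_ge_max e_in e_gt0 adm_k (leq_addr _ _).
by congr (u ^+ _ * v ^+ _); lia.
Qed.

Lemma children_weight (P := param_p e) (Q := param_q e) :
  \sum_(k <- admissibles e) weight (rcons e k) =
    \sum_(j < P.+1) u ^+ (P.+1 - j) * v ^+ (Q + j) + (u ^+ P.+2 * v) *+ (Q - 1).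
Proof.
have lt_mn := max_entry_lt_size e_in e_gt0.
rewrite children_weight_below_max {}/P {}/Q.
have [lt_am|eq_am] : (last 0 e < m \/ last 0 e = m)%N.
  by have := last_le_max_entry e_gt0; lia.
- have [-> ->] := params_lt_max e_in e_gt0 lt_am.
  rewrite admissibles_below_max_lt_last // subnn mulr0n addr0 big_ord_recl /=.
  have -> : (n.+2 - m = (n.+1 - m).+1)%N by lia.
  by rewrite subn0 expr1 mulr1n; congr (_ + _); apply: eq_bigr => j _.
- have [-> ->] := params_eq_max e_in e_gt0 eq_am.
  have -> : (n.+1 - m = (n - m).+1)%N by lia.
  have -> : (n.+2 - m = (n - m).+2)%N by lia.
  rewrite subn1 /= addrC; congr (_ + _); apply: eq_bigr => j _.
  by rewrite addSnnS.
Qed.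

End ChildrenWeight.

Lemma monomial_recurrence (R : numFieldType) (u v : R) (P Q : nat) :
  u != 0 -> u != v -> (1 <= Q)%N ->
  \sum_(j < P.+1) u ^+ (P.+1 - j) * v ^+ (Q + j) + (u ^+ P.+2 * v) *+ (Q - 1) =
  (u * (u ^+ P * v ^+ Q) - v * (v ^+ P * v ^+ Q)) / (1 - v / u)
  + u ^+ 2 * v * (u ^+ P * Q%:R - u ^+ P * 1 ^+ Q).
Proof.
move=> u_neq0 neq_uv ge_Q1.
set S := \sum_(j < P.+1) u ^+ (P - j) * v ^+ j.
have geomE : u ^+ P.+1 - v ^+ P.+1 = (u - v) * S by rewrite subrXX.
have sumE : \sum_(j < P.+1) u ^+ (P.+1 - j) * v ^+ (Q + j) = u * v ^+ Q * S.
  rewrite /S mulr_sumr; apply: eq_bigr => -[j lt_j] _ /=.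
  by rewrite subSn // exprS exprD; ring.
have sub_neq0 : u - v != 0 by rewrite subr_eq0.
have den_neq0 : 1 - v / u != 0.
  by rewrite -(divff u_neq0) -mulrBl mulf_neq0 // invr_eq0.
rewrite sumE -mulr_natr natrB // expr1n mulr1 !exprS in geomE *.
have -> : v * (v ^+ P * v ^+ Q) = (u * u ^+ P - (u - v) * S) * v ^+ Q.
  by rewrite -geomE; ring.
by field; rewrite u_neq0 sub_neq0.
Qed.

Fixpoint enum_inI (n : nat) : seq (seq nat) :=
  if n is n'.+1 then [seq rcons e k | e <- enum_inI n', k <- admissibles e]
  else [:: [::]].

Lemma mem_enum_inI n s : (s \in enum_inI n) = (size s == n) && inI201_210 s.
Proof.
elim: n s => [|n IHn] s; first by rewrite inE size_eq0; case: s.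
apply/idP/idP.
- case/allpairsPdep=> e [k [e_in k_in ->]].
  move: e_in k_in; rewrite IHn mem_filter => /andP[/eqP <- _] /andP[adm_k _].
  by rewrite size_rcons eqxx.
- case/andP; case/lastP: s => [|e k] //; rewrite size_rcons eqSS => size_e adm_k.
  apply/allpairsPdep; exists e, k; split=> //.
    by rewrite IHn size_e; case/inI201_210_rcons: adm_k => ->.
  by rewrite mem_filter mem_iota ltnS (admissible_le_size adm_k) leq0n !andbT.
Qed.

Lemma enum_inI_uniq n : uniq (enum_inI n).
Proof.
elim: n => [//|n IHn] /=; apply: allpairs_uniq_dep => //.
- by move=> e _; rewrite filter_uniq // iota_uniq.
- by move=> [e1 k1] [e2 k2] _ _ /= /rcons_inj[-> ->].
Qed.

Lemma big_inI_tuples (V : nmodType) n (P : pred (seq nat)) (F : seq nat -> V) :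
  \sum_(t : n.-tuple 'I_n | inI201_210 (map val t) && P (map val t)) F (map val t)
  = \sum_(s <- enum_inI n | P s) F s.
Proof.
pose h (t : n.-tuple 'I_n) := map val (val t).
rewrite (eq_bigl (fun t => (t \in predT) && (inI201_210 (h t) && P (h t)))) //.
rewrite -(big_image_cond _ _ h predT (fun s => inI201_210 s && P s) F) -big_filter_cond.
apply/perm_big/uniq_perm; [|exact: enum_inI_uniq|].
  rewrite filter_uniq // map_inj_uniq ?enum_uniq // => t1 t2 /(inj_map val_inj).
  exact: val_inj.
move=> s; rewrite mem_filter mem_enum_inI.
apply/andP/andP => [[s_in /imageP[t _ Est]]|[/eqP size_s s_in]].
  by split=> //; rewrite Est /h size_map size_tuple.
split=> //.
have lt_s : all (fun x => x < n)%N s.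
  apply/(all_nthP 0%N) => i lt_i; have [inv _] := proj1 (inI201_210P s) s_in.
  by apply: leq_ltn_trans (inv i lt_i) _; rewrite -size_s.
have valK : map val (pmap (insub : nat -> option 'I_n) s) = s.
  by elim: s lt_s {s_in size_s} => //= x s IHs /andP[lt_x /IHs]; rewrite insubT /= => ->.
have size_t : size (pmap (insub : nat -> option 'I_n) s) == n.
  by rewrite -(size_map val) valK size_s.
by apply/imageP; exists (Tuple size_t); rewrite // /h /= valK.
Qed.

Lemma params_gt0 e : inI201_210 e -> (0 < size e)%N ->
  (0 < param_p e)%N && (0 < param_q e)%N.
Proof.
move=> e_in e_gt0; have lt_mn := max_entry_lt_size e_in e_gt0.
have le_am := last_le_max_entry e_gt0.
rewrite param_pE param_qE -!has_count; apply/andP; split; apply/hasP.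
  exists (size e); last by apply: leq_ltn_trans le_am lt_mn.
  by rewrite mem_filter mem_iota ltnSn admissible_ge_max // ltnW ?leqnn.
exists (last 0%N e); rewrite ?leqnn //.
by rewrite mem_filter mem_iota admissible_last //= ltnS (leq_trans le_am (ltnW lt_mn)).
Qed.

Lemma fpoly_enumE (R : numFieldType) n (u : R) :
  fpoly n u = \sum_(s <- enum_inI n | (0 < param_p s)%N && (0 < param_q s)%N)
                 u ^+ param_p s *: 'X ^+ param_q s.
Proof. exact: (big_inI_tuples _ (fun s => (0 < param_p s)%N && (0 < param_q s)%N)). Qed.

Lemma big_enum_inI_params_gt0 (V : nmodType) n (F : seq nat -> V) : (0 < n)%N ->
  \sum_(s <- enum_inI n | (0 < param_p s)%N && (0 < param_q s)%N) F s =
  \sum_(s <- enum_inI n) F s.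
Proof.
move=> n_gt0; rewrite big_seq_cond [RHS]big_seq; apply: eq_bigl => s.
case s_in: (s \in enum_inI n) => //=; move: s_in; rewrite mem_enum_inI.
by case/andP=> /eqP size_s s_inI; apply: params_gt0; rewrite ?size_s.
Qed.

Lemma fn_enumE (R : numFieldType) n (u v : R) : (0 < n)%N ->
  fn n u v = \sum_(s <- enum_inI n) weight u v s.
Proof.
move=> n_gt0; rewrite /fn fpoly_enumE horner_sum big_enum_inI_params_gt0 //.
by apply: eq_bigr => s _; rewrite hornerZ hornerXn.
Qed.

Lemma deriv_fpoly_enumE (R : numFieldType) n (u : R) : (0 < n)%N ->
  (fpoly n u)^`().[1] = \sum_(s <- enum_inI n) u ^+ param_p s * (param_q s)%:R.
Proof.
move=> n_gt0; rewrite fpoly_enumE big_enum_inI_params_gt0 // raddf_sum horner_sum.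
apply: eq_bigr => s _.
by rewrite /= derivZ derivXn hornerZ hornerMn hornerXn expr1n mulr_natr.
Qed.

Theorem proposition4p6 (R : numFieldType) :
  (forall u v : R, fn 1 u v = u * v) /\
  (forall (n : nat) (u v : R), (2 <= n)%N -> u != 0 -> u != v ->
     fn n u v =
       (u * fn n.-1 u v - v * fn n.-1 v v) / (1 - v / u)
       + u ^+ 2 * v * ((fpoly n.-1 u)^`().[1] - fn n.-1 u 1)).
Proof.
split=> [u v|[|n] // u v n_ge2 u_neq0 neq_uv].
  by rewrite fn_enumE //= big_seq1 /weight !expr1.
have n_gt0 : (0 < n)%N by case: n n_ge2.
rewrite /= !fn_enumE // deriv_fpoly_enumE // big_allpairs_dep.
rewrite mulr_sumr [v * _]mulr_sumr -sumrB mulr_suml -sumrB mulr_sumr -big_split.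
rewrite big_seq [RHS]big_seq; apply: eq_bigr => e.
rewrite mem_enum_inI => /andP[/eqP size_e e_in].
have e_gt0 : (0 < size e)%N by rewrite size_e.
rewrite children_weight // monomial_recurrence //.
by case/andP: (params_gt0 e_in e_gt0).
Qed.
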